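(* In the periodic lock scheduling problem, there exists a schedule $\sigma$ such that $C_{\mathrm{avg},\sigma}$ is well-defined (the limit exists) and finite.
   Context: Periodic lock scheduling problem. Time is discrete, periods $t=1,2,\dots$. There are $k$ vessel streams; stream $i$ has a direction $\delta_i\in\{D,U\}$, an integer periodicity $\lambda_i\ge1$ and an integer offset $1\le\mu_i\le\lambda_i$; $a_i(t)=1$ if $t\equiv\mu_i\pmod{\lambda_i}$ and $0$ otherwise, $a_\delta(t)=\sum_{i:\delta_i=\delta}a_i(t)$. A schedule is a sequence $\sigma=(\sigma(t))_{t\ge1}$ with $\sigma(t)\in\{D,U,W\}$ ($D$: process downstream waiting vessels and switch alignment to upstream; $U$ symmetrically; $W$: wait); it is feasible if the non-$W$ actions alternate between $D$ and $U$. Queue lengths: $n_D(0)=n_U(0)=0$ and for $t\ge1$, $n_\delta(t)=0$ if $\sigma(t)=\delta$ and $n_\delta(t)=n_\delta(t-1)+a_\delta(t)$ otherwise. $C_\sigma(t)=n_D(t)+n_U(t)$ and $C_{\mathrm{avg},\sigma}=\lim_{T\to\infty}\frac1T\sum_{t=1}^TC_\sigma(t)$. *)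

From Stdlib Require Import Reals Lra Lia Arith List.
Open Scope R_scope.

(* Directions D (downstream) and U (upstream). *)
Inductive dir : Set := Dn | Up.

Inductive action : Set := AD | AU | AW.

Definition dir_eqb (d e : dir) : bool :=
  match d, e with Dn, Dn | Up, Up => true | _, _ => false end.

Definition act_of (d : dir) : action := match d with Dn => AD | Up => AU end.

Record stream : Set := mkStream { sdir : dir; lam : nat; mu : nat }.

Definition valid_stream (s : stream) : Prop :=
  (1 <= lam s)%nat /\ (1 <= mu s)%nat /\ (mu s <= lam s)%nat.

Definition arrival (s : stream) (t : nat) : nat :=
  if Nat.eqb (t mod lam s) (mu s mod lam s) then 1%nat else 0%nat.

Definition arr (ss : list stream) (d : dir) (t : nat) : nat :=
  list_sum (map (fun s => arrival s t) (filter (fun s => dir_eqb d (sdir s)) ss)).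

(* A schedule: sigma(t) for t >= 1 (sigma 0 is irrelevant). *)
Definition schedule := nat -> action.

Definition feasible (sigma : schedule) : Prop :=
  forall t1 t2 : nat, (1 <= t1)%nat -> (t1 < t2)%nat ->
    sigma t1 <> AW -> sigma t2 <> AW ->
    (forall t, (t1 < t)%nat -> (t < t2)%nat -> sigma t = AW) ->
    sigma t1 <> sigma t2.

Fixpoint queue (ss : list stream) (sigma : schedule) (d : dir) (t : nat) : nat :=
  match t with
  | O => O
  | S t' => if match sigma (S t'), act_of d with
               | AD, AD | AU, AU | AW, AW => true | _, _ => false end
            then O
            else (queue ss sigma d t' + arr ss d (S t'))%nat
  end.

Definition cost (ss : list stream) (sigma : schedule) (t : nat) : nat :=
  (queue ss sigma Dn t + queue ss sigma Up t)%nat.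

Fixpoint cum_cost (ss : list stream) (sigma : schedule) (T : nat) : R :=
  match T with
  | O => 0
  | S T' => cum_cost ss sigma T' + INR (cost ss sigma (S T'))
  end.

(* (1/T) sum_{t=1}^T C_sigma(t); the value at T = 0 is irrelevant for the limit. *)
Definition avg_cost_seq (ss : list stream) (sigma : schedule) (T : nat) : R :=
  cum_cost ss sigma T / INR T.

From Stdlib Require Import Reals List.
From Stdlib Require Import Lra Lia Arith.
Open Scope R_scope.

(* The schedule that alternates D and U is feasible, and under it the queue
   served at time t is emptied while the other one holds exactly the arrivals
   of time t.  Hence the cost is periodic with period twice a common multiple
   of the periodicities, and the average of a periodic sequence converges to
   its mean over one period. *)

Definition alternating : schedule := fun t => if Nat.odd t then AD else AU.

Lemma alternating_feasible : feasible alternating.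
Proof.
  intros t1 t2 _ Ht12 _ _ Hwait.
  assert (Ht2 : t2 = S t1).
  { destruct (Nat.eq_dec t2 (S t1)) as [|Hne]; [assumption|].
    specialize (Hwait (S t1) ltac:(lia) ltac:(lia)).
    unfold alternating in Hwait; destruct (Nat.odd (S t1)); discriminate. }
  subst t2; unfold alternating.
  rewrite Nat.odd_succ, <- Nat.negb_odd.
  destruct (Nat.odd t1); discriminate.
Qed.

Lemma queue_alternating ss t : (1 <= t)%nat ->
  queue ss alternating Dn t = (if Nat.odd t then 0 else arr ss Dn t)%nat /\
  queue ss alternating Up t = (if Nat.odd t then arr ss Up t else 0)%nat.
Proof.
  induction t as [|t IH]; intros Ht; [lia|].
  simpl queue; unfold alternating at 1 3.
  rewrite Nat.odd_succ, <- Nat.negb_odd.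
  destruct t as [|t]; [split; reflexivity|].
  destruct (IH ltac:(lia)) as [-> ->].
  destruct (Nat.odd (S t)); split; reflexivity.
Qed.

Lemma cost_alternating ss t : (1 <= t)%nat ->
  cost ss alternating t = (if Nat.odd t then arr ss Up t else arr ss Dn t).
Proof.
  intros Ht; unfold cost.
  destruct (queue_alternating ss t Ht) as [-> ->].
  destruct (Nat.odd t); lia.
Qed.

Lemma arrival_periodic s P t : Nat.divide (lam s) P ->
  arrival s (t + P) = arrival s t.
Proof.
  intros [k ->]; unfold arrival.
  rewrite Nat.Div0.mod_add; reflexivity.
Qed.

Lemma arr_periodic ss d P t : Forall (fun s => Nat.divide (lam s) P) ss ->
  arr ss d (t + P) = arr ss d t.
Proof.
  intros Hdiv; unfold arr.
  induction Hdiv as [|s ss Hs _ IH]; [reflexivity|]; simpl.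
  destruct (dir_eqb d (sdir s)); simpl; [|exact IH].
  rewrite IH, arrival_periodic by exact Hs; reflexivity.
Qed.

Definition streams_period (ss : list stream) : nat :=
  fold_right (fun s p => lam s * p)%nat 1%nat ss.

Lemma lam_divide_streams_period ss :
  Forall (fun s => Nat.divide (lam s) (streams_period ss)) ss.
Proof.
  induction ss as [|s ss IH]; constructor; simpl.
  - apply Nat.divide_factor_l.
  - eapply Forall_impl; [|exact IH].
    intros s' Hs'; apply Nat.divide_mul_r, Hs'.
Qed.

Lemma streams_period_pos ss : Forall valid_stream ss ->
  (0 < streams_period ss)%nat.
Proof.
  induction 1 as [|s ss [Hlam _] _ IH]; simpl; [lia|].
  apply Nat.mul_pos_pos; lia.
Qed.

Lemma cost_alternating_periodic ss t : (1 <= t)%nat ->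
  cost ss alternating (t + 2 * streams_period ss) = cost ss alternating t.
Proof.
  intros Ht.
  assert (Hdiv : Forall (fun s => Nat.divide (lam s) (2 * streams_period ss)) ss).
  { eapply Forall_impl; [|apply lam_divide_streams_period].
    intros s Hs; apply Nat.divide_mul_r, Hs. }
  rewrite !cost_alternating by lia.
  rewrite Nat.odd_add, Nat.odd_mul, Bool.xorb_false_r.
  rewrite !arr_periodic by exact Hdiv; reflexivity.
Qed.

Lemma Un_cv_of_dist_le_div (u : nat -> R) (L K : R) :
  (forall T, (1 <= T)%nat -> Rabs (u T - L) <= K / INR T) -> Un_cv u L.
Proof.
  intros Hdist eps Heps.
  destruct (INR_unbounded (K / eps)) as [N HN].
  exists (S N); intros T HT; unfold R_dist.
  assert (HNT : INR N < INR T) by (apply lt_INR; lia).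
  assert (HT0 : 0 < INR T) by (pose proof (pos_INR N); lra).
  apply Rle_lt_trans with (K / INR T); [apply Hdist; lia|].
  apply Rmult_lt_reg_r with (INR T); [exact HT0|].
  assert (HK : K / eps * eps = K) by (field; lra).
  replace (K / INR T * INR T) with K by (field; lra).
  nra.
Qed.

Fixpoint partial_sum (c : nat -> nat) (T : nat) : R :=
  match T with
  | O => 0
  | S T' => partial_sum c T' + INR (c (S T'))
  end.

Lemma partial_sum_mono c a b : (a <= b)%nat -> partial_sum c a <= partial_sum c b.
Proof.
  induction 1 as [|b _ IH]; simpl; [lra|].
  pose proof (pos_INR (c (S b))); lra.
Qed.

Lemma cum_cost_partial_sum ss sigma T :
  cum_cost ss sigma T = partial_sum (cost ss sigma) T.
Proof. induction T as [|T IH]; simpl; [reflexivity|]; rewrite IH; reflexivity. Qed.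

Section PeriodicAverage.

Variable c : nat -> nat.
Variable P : nat.
Hypothesis P_pos : (0 < P)%nat.
Hypothesis c_periodic : forall t, (1 <= t)%nat -> c (t + P) = c t.

Lemma partial_sum_add_period T :
  partial_sum c (T + P) = partial_sum c T + partial_sum c P.
Proof.
  induction T as [|T IH]; simpl; [lra|].
  replace (S (T + P)) with (S T + P)%nat by lia.
  rewrite IH, c_periodic by lia; lra.
Qed.

Lemma partial_sum_mul_period_add q r :
  partial_sum c (q * P + r) = INR q * partial_sum c P + partial_sum c r.
Proof.
  induction q as [|q IH]; [simpl; lra|].
  replace (S q * P + r)%nat with (q * P + r + P)%nat by lia.
  rewrite partial_sum_add_period, IH, S_INR; lra.
Qed.

Lemma partial_sum_deviation T :
  Rabs (partial_sum c T * INR P - INR T * partial_sum c P)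
    <= INR P * partial_sum c P.
Proof.
  pose proof (Nat.div_mod T P ltac:(lia)) as HT.
  pose proof (Nat.mod_upper_bound T P ltac:(lia)) as Hr.
  set (q := (T / P)%nat) in *; set (r := (T mod P)%nat) in *.
  assert (Hsum : partial_sum c T = INR q * partial_sum c P + partial_sum c r).
  { rewrite HT, Nat.mul_comm; apply partial_sum_mul_period_add. }
  assert (HTr : INR T = INR q * INR P + INR r).
  { rewrite HT at 1; rewrite plus_INR, mult_INR; ring. }
  assert (Hsr : 0 <= partial_sum c r <= partial_sum c P).
  { split; [apply (partial_sum_mono c 0)|apply partial_sum_mono]; lia. }
  assert (Hrr : 0 <= INR r <= INR P).
  { split; [apply pos_INR|apply le_INR; lia]. }
  (* the whole periods cancel, leaving P * sum(r) - r * sum(P) *)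
  rewrite Hsum, HTr; apply Rabs_le; split; nra.
Qed.

Lemma periodic_average_cv :
  Un_cv (fun T => partial_sum c T / INR T) (partial_sum c P / INR P).
Proof.
  apply Un_cv_of_dist_le_div with (K := partial_sum c P).
  intros T HT.
  assert (HT0 : 0 < INR T) by (apply lt_0_INR; lia).
  assert (HP0 : 0 < INR P) by (apply lt_0_INR; lia).
  replace (partial_sum c T / INR T - partial_sum c P / INR P)
    with ((partial_sum c T * INR P - INR T * partial_sum c P) / (INR T * INR P))
    by (field; lra).
  unfold Rdiv; rewrite Rabs_mult, Rabs_inv, (Rabs_pos_eq (INR T * INR P)) by nra.
  apply Rle_trans with (INR P * partial_sum c P * / (INR T * INR P)).
  - apply Rmult_le_compat_r; [left; apply Rinv_0_lt_compat; nra|].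
    apply partial_sum_deviation.
  - right; field; lra.
Qed.

End PeriodicAverage.

Theorem lemma4 (ss : list stream) (Hvalid : Forall valid_stream ss) :
  exists sigma : schedule, feasible sigma /\
    exists L : R, Un_cv (avg_cost_seq ss sigma) L.
Proof.
  set (P := (2 * streams_period ss)%nat).
  assert (HP : (0 < P)%nat) by (pose proof (streams_period_pos ss Hvalid); lia).
  exists alternating; split; [exact alternating_feasible|].
  exists (partial_sum (cost ss alternating) P / INR P).
  intros eps Heps.
  destruct (periodic_average_cv (cost ss alternating) P HP
              (cost_alternating_periodic ss) eps Heps) as [N HN].
  exists N; intros T HT.
  unfold avg_cost_seq; rewrite cum_cost_partial_sum.
  exact (HN T HT).
Qed.
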